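(* Let $\varrho,\sigma$ be density operators on a finite-dimensional Hilbert space and $\alpha\in(0,1)$ be such that (1) $\overline{D}_\alpha^{\mathrm{test}}(\varrho\|\sigma)<\overline{D}_\alpha^{\mathrm{meas}}(\varrho\|\sigma)$, and (2) $\frac1nD_\alpha^{\mathrm{test}}(\varrho^{\otimes n}\|\sigma^{\otimes n})<\overline{D}_\alpha^{\mathrm{meas}}(\varrho\|\sigma)$ for every $n\in\mathbb N$. Then $\hat D_\alpha^{\mathrm{test}}(\varrho\|\sigma)<\overline{D}_\alpha^{\mathrm{meas}}(\varrho\|\sigma)$.
   Context: For probability vectors $p,q$ and $\alpha\in(0,1)$, $D_\alpha(p\|q)=\frac{1}{\alpha-1}\log\sum_xp(x)^\alpha q(x)^{1-\alpha}$. For a finite-outcome POVM $M$, $\mathcal M(\varrho):=(\operatorname{Tr}M_x\varrho)_x$; $D_\alpha^{\mathrm{meas}}(\varrho\|\sigma):=\sup_MD_\alpha(\mathcal M(\varrho)\|\mathcal M(\sigma))$ and $\overline{D}_\alpha^{\mathrm{meas}}:=\lim_n\frac1nD_\alpha^{\mathrm{meas}}(\varrho^{\otimes n}\|\sigma^{\otimes n})$. A test is an operator $0\le T\le I$; $\mathcal T(X):=(\operatorname{Tr}XT,\operatorname{Tr}X(I-T))$; $D_\alpha^{\mathrm{test}}(\varrho\|\sigma):=\max_{0\le T\le I}D_\alpha(\mathcal T(\varrho)\|\mathcal T(\sigma))$; $\overline{D}_\alpha^{\mathrm{test}}:=\limsup_n\frac1nD_\alpha^{\mathrm{test}}(\varrho^{\otimes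 n}\|\sigma^{\otimes n})$; $\hat D_\alpha^{\mathrm{test}}:=\sup_n\frac1nD_\alpha^{\mathrm{test}}(\varrho^{\otimes n}\|\sigma^{\otimes n})$. *)

From HB Require Import structures.
From mathcomp Require Import all_boot all_order all_algebra.
From mathcomp Require Import complex mxtens.
From mathcomp Require Import all_classical all_reals all_analysis.
Set Implicit Arguments. Unset Strict Implicit. Unset Printing Implicit Defensive.
Import Order.TTheory GRing.Theory Num.Theory.
Local Open Scope ring_scope.
Local Open Scope complex_scope.

Section QDefs.
Variable R : realType.
Local Notation C := R[i].

Definition adjmx {m n} (A : 'M[C]_(m, n)) : 'M[C]_(n, m) :=
  \matrix_(i, j) (A j i)^*.

Definition psd {d} (A : 'M[C]_d) : Prop :=
  adjmx A = A /\ forall v : 'cV[C]_d, 0 <= (adjmx v *m A *m v) 0 0.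

Definition density {d} (rho : 'M[C]_d) : Prop := psd rho /\ \tr rho = 1.

Fixpoint tpow {d} (n : nat) (A : 'M[C]_d) : 'M[C]_(d ^ n) :=
  match n with
  | 0 => 1%:M
  | n'.+1 => castmx (esym (expnS d n'), esym (expnS d n')) (A *t tpow n' A)
  end.

(* Renyi divergence of two (nonnegative) vectors indexed by 'I_k,
   alpha in (0,1); value +oo when the overlap sum vanishes (log 0 = -oo,
   divided by alpha-1 < 0). *)
Definition renyiD (alpha : R) {k} (p q : 'I_k -> R) : \bar R :=
  let s := \sum_(x < k) (p x `^ alpha * q x `^ (1 - alpha)) in
  if s == 0 then +oo%E else (((alpha - 1)^-1 * ln s)%:E).

Definition povm {d k} (M : 'I_k -> 'M[C]_d) : Prop :=
  (forall x, psd (M x)) /\ \sum_(x < k) M x = 1%:M.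

(* outcome distribution (Tr M_x rho)_x (real parts; these are real) *)
Definition outdist {d k} (M : 'I_k -> 'M[C]_d) (rho : 'M[C]_d) : 'I_k -> R :=
  fun x => complex.Re (\tr (M x *m rho)).

Definition Dmeas (alpha : R) {d} (rho sigma : 'M[C]_d) : \bar R :=
  ereal_sup [set v | exists k (M : 'I_k -> 'M[C]_d),
     povm M /\ v = renyiD alpha (outdist M rho) (outdist M sigma)].

Definition is_test {d} (T : 'M[C]_d) : Prop := psd T /\ psd (1%:M - T).

Definition testdist {d} (T : 'M[C]_d) (rho : 'M[C]_d) : 'I_2 -> R :=
  fun x => if x == ord0 then complex.Re (\tr (rho *m T))
           else complex.Re (\tr (rho *m (1%:M - T))).

(* the max over tests is written as a supremum (it is attained) *)
Definition Dtest (alpha : R) {d} (rho sigma : 'M[C]_d) : \bar R :=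
  ereal_sup [set v | exists T : 'M[C]_d,
     is_test T /\ v = renyiD alpha (testdist T rho) (testdist T sigma)].

(* (1/n) D(rho^{n} || sigma^{n}) at n = m.+1 *)
Definition Dmeas_n alpha {d} (rho sigma : 'M[C]_d) (m : nat) : \bar R :=
  ((m.+1%:R)^-1)%:E * Dmeas alpha (tpow m.+1 rho) (tpow m.+1 sigma).

Definition Dtest_n alpha {d} (rho sigma : 'M[C]_d) (m : nat) : \bar R :=
  ((m.+1%:R)^-1)%:E * Dtest alpha (tpow m.+1 rho) (tpow m.+1 sigma).

Definition Dmeas_bar alpha {d} (rho sigma : 'M[C]_d) : \bar R :=
  limn (Dmeas_n alpha rho sigma).

Definition Dtest_bar alpha {d} (rho sigma : 'M[C]_d) : \bar R :=
  limn_esup (Dtest_n alpha rho sigma).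

Definition Dtest_hat alpha {d} (rho sigma : 'M[C]_d) : \bar R :=
  ereal_sup (range (Dtest_n alpha rho sigma)).

End QDefs.

From HB Require Import structures.
From mathcomp Require Import all_boot all_order all_algebra.
From mathcomp Require Import complex mxtens.
From mathcomp Require Import all_classical all_reals all_analysis.
Import Order.TTheory GRing.Theory Num.Theory.
Local Open Scope ring_scope.

(* Only the shape of the hypotheses matters: a sequence whose limsup lies
   strictly below L is eventually bounded by some tail supremum < L, and the
   finitely many terms before that tail are each < L, so their maximum is too. *)

Section SupremumOfSequence.
Local Open Scope ereal_scope.
Variable R : realType.
Implicit Types (u : (\bar R)^nat) (L : \bar R).

Lemma limn_esup_lt_esups u L : limn_esup u < L -> exists N, esups u N < L.
Proof.
rewrite limn_esup_lim (cvg_lim _ (@cvg_esups_inf _ u)) //.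
by move=> /ereal_inf_lt[_ [N _ <-] ltNL]; exists N.
Qed.

Lemma ereal_sup_range_le_max u N :
  ereal_sup (range u) <= maxe (\big[maxe/-oo]_(k < N) u k) (esups u N).
Proof.
apply: ge_ereal_sup => _ [k _ <-]; rewrite le_max.
have [ltkN|leNk] := ltnP k N.
  by rewrite (le_bigmax -oo (fun i : 'I_N => u i) (Ordinal ltkN)).
by rewrite orbC ereal_sup_ubound //; exists k.
Qed.

Lemma ereal_sup_range_lt u L :
  limn_esup u < L -> (forall n, u n < L) -> ereal_sup (range u) < L.
Proof.
move=> /limn_esup_lt_esups[N ltNL] ltuL.
apply: le_lt_trans (ereal_sup_range_le_max u N) _.
rewrite gt_max ltNL andbT; apply: bigmax_lt => [|k _]; last exact: ltuL.
exact: le_lt_trans (leNye (u 0%N)) (ltuL 0%N).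
Qed.

End SupremumOfSequence.

Theorem mainTheorem17 (R : realType) (d : nat) (rho sigma : 'M[R[i]]_d)
  (alpha : R) :
  density rho -> density sigma -> 0 < alpha < 1 ->
  (Dtest_bar alpha rho sigma < Dmeas_bar alpha rho sigma)%E ->
  (forall n : nat, (Dtest_n alpha rho sigma n < Dmeas_bar alpha rho sigma)%E) ->
  (Dtest_hat alpha rho sigma < Dmeas_bar alpha rho sigma)%E.
Proof. by move=> _ _ _; exact: ereal_sup_range_lt. Qed.
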